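(* Let $A\in\mathbb{R}^{n\times n}$, $B\in\mathbb{R}^{n\times m}$, $C\in\mathbb{R}^{p\times n}$ and let $\mathscr{G}$ be a weighted directed graph on $N$ nodes with Laplacian $\mathcal{L}$, and consider the dynamic network $(A,B,C,\mathscr{G})$ described in the context. Let $L_{G}=+\infty$, $L_{K}=+\infty$ and $\varrho=1$. Suppose that for any given positive constants $C_{x}$, $C_{\hat{x}}$, $C_{\hat{u}}$ there exist a communication protocol $H(\gamma,\alpha,\alpha_{u},L,L_{u},G)\in\mathscr{H}(\varrho,L_{G})$ and a control protocol $U(K)\in\mathscr{U}(L_{K})$ such that for any initial conditions with $\|X(0)\|_\infty<C_{x}$, $\|\hat{X}(0)\|_\infty<C_{\hat{x}}$ and $\|\hat{U}(0)\|_\infty<C_{\hat{u}}$, the closed-loop network achieves inter-agent state observation under $H$ and $U$, i.e. $\lim_{t\to\infty}(x_j(t)-\hat x_j(t))=0$ for all $j=1,\dots,N$. Then $(A,C)$ is detectable.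
   Context: Agents $i=1,\dots,N$ have dynamics $x_i(t+1)=Ax_i(t)+Bu_i(t)$, $y_i(t)=Cx_i(t)$, $t=0,1,\dots$. The communication graph $\mathscr{G}$ has node set $\{1,\dots,N\}$ and weighted adjacency matrix $\mathscr{A}=[a_{ij}]$ with $a_{ii}=0$, $a_{ij}\ge0$, and $a_{ij}>0$ iff there is a channel from $j$ to $i$; $N_i=\{j: a_{ij}>0\}$. The Laplacian is $\mathcal{L}=\mathrm{diag}(\sum_j a_{1j},\dots,\sum_j a_{Nj})-\mathscr{A}$. Norms: for a vector, $\|\cdot\|_\infty$ is the max norm; for a matrix, $\|\cdot\|$ is the spectral (Euclidean operator) norm. Quantizer: for $p\in(0,1]$ and a positive integer $M$, $Q_{p,M}(y)=ip$ if $ip-p/2\le y<ip+p/2$, $i=0,1,\dots,M-1$; $Q_{p,M}(y)=Mp$ if $y\ge Mp-p/2$; $Q_{p,M}(y)=-Q_{p,M}(-y)$ if $y<-p/2$; applied componentwise to vectors. Communication protocol set: for $\varrho\in(0,1]$ and $L_G\in\mathbb{R}^+\cup\{+\infty\}$, $\mathscr{H}(\varrho,L_G)$ consists of protocols $H(\gamma,\alpha,\alpha_u,L,L_u,G)$ with $\gamma\in(0,\varrho)$, $\alpha,\alpha_u\in(0,1]$, positive integers $L,L_u$, and $G\in\mathbb{R}^{n\times p}$ with $\|G\|<L_G$. Under such a protocol, each agent $j$ runs the encoder: $\hat x_j(0)=\hat x_{j0}$, $\hat u_j(0)=\hat u_{j0}$, and for $t\ge1$: $s_j(t)=Q_{\alpha,L}\big((y_j(t-1)-C\hat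 x_j(t-1))/\gamma^{t-1}\big)$, $\hat x_j(t)=A\hat x_j(t-1)+\gamma^{t-1}Gs_j(t)+B\hat u_j(t-1)$, $s_{u,j}(t)=Q_{\alpha_u,L_u}\big((u_j(t)-\hat u_j(t-1))/\gamma^{t-1}\big)$, $\hat u_j(t)=\hat u_j(t-1)+\gamma^{t-1}s_{u,j}(t)$; the symbols $s_j(t),s_{u,j}(t)$ are sent over each channel $(j,i)$, and receiver $i$ runs the decoder $\hat x_{ji}(0)=\hat x_{j0}$, $\hat u_{ji}(0)=\hat u_{j0}$, $\hat x_{ji}(t)=A\hat x_{ji}(t-1)+\gamma^{t-1}Gs_j(t)+B\hat u_{ji}(t-1)$, $\hat u_{ji}(t)=\hat u_{ji}(t-1)+\gamma^{t-1}s_{u,j}(t)$ (so $\hat x_{ji}(t)=\hat x_j(t)$). Control protocol set: for $L_K\in\mathbb{R}^+\cup\{+\infty\}$, $\mathscr{U}(L_K)$ consists of protocols $U(K)$, $K\in\mathbb{R}^{m\times n}$ with $\|K\|<L_K$, given by $u_i(t)=K\sum_{j\in N_i}a_{ij}(\hat x_{ji}(t)-\hat x_i(t))$, $t\ge0$. Stacked vectors: $X(t)=(x_1^T(t),\dots,x_N^T(t))^T$, $\hat X(t)=(\hat x_1^T(t),\dots,\hat x_N^T(t))^T$, $\hat U(t)=(\hat u_1^T(t),\dots,\hat u_N^T(t))^T$. *)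

From HB Require Import structures.
From mathcomp Require Import all_boot all_order all_algebra.
From mathcomp Require Import reals.
From mathcomp Require Import complex.
Set Implicit Arguments. Unset Strict Implicit. Unset Printing Implicit Defensive.
Import Order.TTheory GRing.Theory Num.Theory.
Local Open Scope ring_scope.

Section Defs.
Variable R : realType.

Definition Qpos (p : R) (M : nat) (y : R) : R :=
  if M%:R * p - p / 2 <= y then M%:R * p
  else (Num.floor (y / p + 1 / 2))%:~R * p.
(* Q_{p,M}(y) = i p  iff i p - p/2 <= y < i p + p/2 (i = 0..M-1),
   = M p if y >= M p - p/2, and = - Q_{p,M}(-y) if y < -p/2. *)
Definition Qnt (p : R) (M : nat) (y : R) : R :=
  if y < - (p / 2) then - Qpos p M (- y) else Qpos p M y.
Definition Qvec (k : nat) (p : R) (M : nat) (v : 'cV[R]_k) : 'cV[R]_k :=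
  map_mx (Qnt p M) v.

Variables (n m pp N : nat).
Variables (A : 'M[R]_n) (B : 'M[R]_(n, m)) (C : 'M[R]_(pp, n)) (adj : 'M[R]_N).

Record cl_state := CLState {
  cl_x : 'I_N -> 'cV[R]_n;
  cl_xh : 'I_N -> 'cV[R]_n;
  cl_uh : 'I_N -> 'cV[R]_m }.

(* control protocol U(K): u_i = K sum_{j in N_i} a_ij (hat x_ji - hat x_i),
   with hat x_ji = hat x_j *)
Definition ctrl (K : 'M[R]_(m, n)) (xh : 'I_N -> 'cV[R]_n) (i : 'I_N) : 'cV[R]_m :=
  K *m (\sum_(j < N | 0 < adj i j) adj i j *: (xh j - xh i)).

Definition cl_step (gam al alu : R) (L Lu : nat) (G : 'M[R]_(n, pp))
  (K : 'M[R]_(m, n)) (t : nat) (s : cl_state) : cl_state :=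
  let xh' := fun j => A *m cl_xh s j
      + gam ^+ t *: (G *m Qvec al L ((gam ^+ t)^-1 *: (C *m cl_x s j - C *m cl_xh s j)))
      + B *m cl_uh s j in
  let uh' := fun j => cl_uh s j
      + gam ^+ t *: Qvec alu Lu ((gam ^+ t)^-1 *: (ctrl K xh' j - cl_uh s j)) in
  let x' := fun i => A *m cl_x s i + B *m ctrl K (cl_xh s) i in
  CLState x' xh' uh'.

Fixpoint cl_traj (gam al alu : R) (L Lu : nat) (G : 'M[R]_(n, pp))
  (K : 'M[R]_(m, n)) (s0 : cl_state) (t : nat) : cl_state :=
  match t with
  | 0 => s0
  | t'.+1 => cl_step gam al alu L Lu G K t' (cl_traj gam al alu L Lu G K s0 t')
  end.

End Defs.

(* sequence of vectors converging to 0 (componentwise = in any norm) *)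
Definition vec_to0 (R : realType) (k : nat) (v : nat -> 'cV[R]_k) : Prop :=
  forall eps : R, 0 < eps -> exists T : nat, forall t : nat, (T <= t)%N ->
    forall r : 'I_k, `|v t r ord0| < eps.

(* Detectability of (A, C): Hautus/PBH rank test,
   rank [lam I - A; C] = n for every complex lam with |lam| >= 1 *)
Definition detectable (R : realType) (n p : nat) (A : 'M[R]_n) (C : 'M[R]_(p, n)) : Prop :=
  forall lam : R[i], 1 <= `|lam| ->
    \rank (col_mx (lam%:M - map_mx (fun x : R => x%:C%C) A)
                  (map_mx (fun x : R => x%:C%C) C)) = n.

(** If [(A, C)] is not detectable, there is an eigenvector [v] of [A] with
    [|lam| >= 1] and [C v = 0]; the orbits [A^t w] of its real and imaginary
    parts [w] are invisible in the outputs.  Since the encoders see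
    the states only through the outputs [C x_j], adding [w] to every initial
    state leaves all estimates unchanged and adds [A^t w] to every state.
    Observation from both initial states forces [A^t w -> 0], hence
    [lam^t v -> 0], which contradicts [|lam^t v| >= |v| > 0]. *)

From HB Require Import structures.
From mathcomp Require Import all_boot all_order all_algebra.
From mathcomp Require Import reals complex.
From mathcomp Require Import lra.
From Stdlib Require Import FunctionalExtensionality.
Set Implicit Arguments. Unset Strict Implicit. Unset Printing Implicit Defensive.
Import Order.TTheory GRing.Theory Num.Theory.
Local Open Scope ring_scope.

Local Notation Re := (@complex.Re _).
Local Notation Im := (@complex.Im _).

Section ObservationShift.
Variables (R : realType) (n m p N : nat).
Variables (A : 'M[R]_n) (B : 'M[R]_(n, m)) (C : 'M[R]_(p, n)) (adj : 'M[R]_N).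
Variables (gam al alu : R) (L Lu : nat) (G : 'M[R]_(n, p)) (K : 'M[R]_(m, n)).

Local Notation step := (cl_step A B C adj gam al alu L Lu G K).
Local Notation traj := (cl_traj A B C adj gam al alu L Lu G K).

Definition shift_x (d : 'cV[R]_n) (s : cl_state R n m N) : cl_state R n m N :=
  CLState (fun i => cl_x s i + d) (cl_xh s) (cl_uh s).

(* Locked: otherwise unification unfolds the quantizers and diverges. *)
Definition encoder_step_def (t : nat) (y : 'I_N -> 'cV[R]_p)
    (xh : 'I_N -> 'cV[R]_n) (uh : 'I_N -> 'cV[R]_m) :
    ('I_N -> 'cV[R]_n) * ('I_N -> 'cV[R]_m) :=
  let xh' := fun j => A *m xh j
      + gam ^+ t *: (G *m Qvec al L ((gam ^+ t)^-1 *: (y j - C *m xh j)))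
      + B *m uh j in
  (xh', fun j => uh j
      + gam ^+ t *: Qvec alu Lu ((gam ^+ t)^-1 *: (ctrl adj K xh' j - uh j))).
Fact encoder_step_key : unit. Proof. by []. Qed.
Definition encoder_step := locked_with encoder_step_key encoder_step_def.
Canonical encoder_step_unlockable := [unlockable fun encoder_step].

Lemma cl_stepE t s : step t s =
  CLState (fun i => A *m cl_x s i + B *m ctrl adj K (cl_xh s) i)
    (encoder_step t (fun j => C *m cl_x s j) (cl_xh s) (cl_uh s)).1
    (encoder_step t (fun j => C *m cl_x s j) (cl_xh s) (cl_uh s)).2.
Proof. by rewrite unlock. Qed.

Lemma cl_step_shift_x t d s : C *m d = 0 ->
  step t (shift_x d s) = shift_x (A *m d) (step t s).
Proof.
move=> Cd; rewrite !cl_stepE /shift_x /=.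
have -> : (fun j => C *m (cl_x s j + d)) = (fun j => C *m cl_x s j).
  by apply: functional_extensionality => j; rewrite mulmxDr Cd addr0.
congr CLState; apply: functional_extensionality => i.
by rewrite mulmxDr addrAC.
Qed.

Lemma cl_traj_shift_x d s t : (forall k, C *m iter k (mulmx A) d = 0) ->
  traj (shift_x d s) t = shift_x (iter t (mulmx A) d) (traj s t).
Proof.
move=> Cd; elim: t => [|t IH] //=.
by rewrite IH cl_step_shift_x.
Qed.

End ObservationShift.

Section Convergence.
Variable R : realType.

Lemma vec_to0B k (u w : nat -> 'cV[R]_k) :
  vec_to0 u -> vec_to0 w -> vec_to0 (fun t => u t - w t).
Proof.
move=> u0 w0 eps eps0; have eps20 : 0 < eps / 2 by rewrite divr_gt0.
have [Tu HTu] := u0 _ eps20; have [Tw HTw] := w0 _ eps20.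
exists (maxn Tu Tw) => t; rewrite geq_max => /andP[tu tw] r.
have := HTu t tu r; have := HTw t tw r; rewrite !mxE.
have := ler_normB (u t r ord0) (w t r ord0); lra.
Qed.

Lemma cV_norm_bounded k (w : 'cV[R]_k) :
  exists2 c : R, 0 < c & forall i, `|w i ord0| < c.
Proof.
have S0 (P : pred 'I_k) : 0 <= \sum_(i | P i) `|w i ord0|.
  by apply: sumr_ge0 => i _.
exists (1 + \sum_i `|w i ord0|) => [|i]; first by have := S0 xpredT; lra.
by rewrite (bigD1 i) //=; have := S0 (predC1 i); lra.
Qed.

End Convergence.

Section RealProjection.
Variable R : realType.
Local Notation realC := (fun x : R => x%:C%C).

Lemma ReD (x y : R[i]) : Re (x + y) = Re x + Re y.
Proof. by case: x; case: y. Qed.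
Lemma ImD (x y : R[i]) : Im (x + y) = Im x + Im y.
Proof. by case: x; case: y. Qed.
Lemma Re_realM (x : R) (z : R[i]) : Re (x%:C%C * z) = x * Re z.
Proof. by case: z => a b /=; rewrite mul0r subr0. Qed.
Lemma Im_realM (x : R) (z : R[i]) : Im (x%:C%C * z) = x * Im z.
Proof. by case: z => a b /=; rewrite mul0r addr0. Qed.

Variable f : R[i] -> R.
Hypotheses (f0 : f 0 = 0) (fD : {morph f : a b / a + b})
           (f_realM : forall (x : R) z, f (x%:C%C * z) = x * f z).

Lemma map_mx_real_mulmx k l (M : 'M[R]_(k, l)) (z : 'cV[R[i]]_l) :
  map_mx f (map_mx realC M *m z) = M *m map_mx f z.
Proof.
apply/matrixP=> i j; rewrite !mxE (big_morph f fD f0).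
by apply: eq_bigr => h _; rewrite !mxE f_realM.
Qed.

Lemma iter_map_mx_real k (M : 'M[R]_k) (z : 'cV[R[i]]_k) t :
  iter t (mulmx M) (map_mx f z) = map_mx f (iter t (mulmx (map_mx realC M)) z).
Proof. by elim: t => //= t ->; rewrite map_mx_real_mulmx. Qed.

End RealProjection.

Lemma iter_mulmx_eigen (F : comNzRingType) k (M : 'M[F]_k) (lam : F) (v : 'cV[F]_k) t :
  M *m v = lam *: v -> iter t (mulmx M) v = lam ^+ t *: v.
Proof.
move=> Mv; elim: t => [|t /= ->]; first by rewrite expr0 scale1r.
by rewrite -scalemxAr Mv scalerA -exprSr.
Qed.

Lemma rank_deficient_unobservable_eigvec (F : fieldType) k q
    (M : 'M[F]_k) (Cm : 'M[F]_(q, k)) (lam : F) :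
  \rank (col_mx (lam%:M - M) Cm) != k ->
  exists2 v : 'cV[F]_k, v != 0 & M *m v = lam *: v /\ Cm *m v = 0.
Proof.
set P := col_mx _ _ => rankP.
have : kermx P^T != 0 by rewrite kermx_eq0 /row_free mxrank_tr.
case/matrix0Pn => i [j kerij]; exists (row i (kermx P^T))^T.
  by apply/matrix0Pn; exists j, ord0; rewrite 2!mxE.
have : P *m (row i (kermx P^T))^T = 0.
  by rewrite -{1}[P]trmxK -trmx_mul -row_mul mulmx_ker row0 trmx0.
rewrite mul_col_mx => /eqP; rewrite col_mx_eq0 => /andP[/eqP eigv /eqP ->].
split=> //; apply/eqP; move/eqP: eigv.
by rewrite mulmxBl mul_scalar_mx subr_eq0 eq_sym.
Qed.

Section Growth.
Variable R : realType.

Lemma normc_le_ReIm (z : R[i]) : `|z| <= (`|Re z| + `|Im z|)%:C%C.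
Proof.
have normC (x : R) : `|x%:C%C| = `|x|%:C%C.
  by rewrite normc_def /= expr0n addr0 sqrtr_sqr.
rewrite {1}[z]complexE; apply: le_trans (ler_normD _ _) _.
rewrite normrM !normC rmorphD /=.
by rewrite normc_def /= expr0n expr1n add0r sqrtr1 mul1r.
Qed.

Lemma eigen_orbit_ReIm_not_to0 k (lam : R[i]) (v : 'cV[R[i]]_k) :
  1 <= `|lam| -> v != 0 ->
  vec_to0 (fun t => map_mx Re (lam ^+ t *: v)) ->
  vec_to0 (fun t => map_mx Im (lam ^+ t *: v)) -> False.
Proof.
move=> lam1 /matrix0Pn[r [c]]; rewrite ord1 => vr0 Re0 Im0.
pose eps := Num.sqrt (Re (v r ord0) ^+ 2 + Im (v r ord0) ^+ 2).
have normv : `|v r ord0| = eps%:C%C by rewrite normc_def.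
have eps0 : 0 < eps by rewrite -ltcR -normv normr_gt0.
have eps20 : 0 < eps / 2 by rewrite divr_gt0.
have [T1 HT1] := Re0 _ eps20; have [T2 HT2] := Im0 _ eps20.
pose t := maxn T1 T2.
have := HT1 t (leq_maxl _ _) r; have := HT2 t (leq_maxr _ _) r.
rewrite !mxE => smallIm smallRe.
have small : `|lam ^+ t * v r ord0| < eps%:C%C.
  by apply: le_lt_trans (normc_le_ReIm _) _; rewrite ltcR; lra.
have large : `|v r ord0| <= `|lam ^+ t * v r ord0|.
  by rewrite normrM normrX ler_peMl // exprn_ege1.
by move: (le_lt_trans large small); rewrite normv ltxx.
Qed.

End Growth.

Definition observation_achievable (R : realType) (n m p N : nat)
    (A : 'M[R]_n) (B : 'M[R]_(n, m)) (C : 'M[R]_(p, n)) (adj : 'M[R]_N) : Prop :=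
  forall Cx Cxh Cuh : R, 0 < Cx -> 0 < Cxh -> 0 < Cuh ->
     exists (gam al alu : R) (L Lu : nat) (G : 'M[R]_(n, p)) (K : 'M[R]_(m, n)),
       [/\ 0 < gam < 1, 0 < al <= 1, 0 < alu <= 1, (0 < L)%N & (0 < Lu)%N] /\
       forall (x0 xh0 : 'I_N -> 'cV[R]_n) (uh0 : 'I_N -> 'cV[R]_m),
         (forall i k, `|x0 i k ord0| < Cx) ->
         (forall i k, `|xh0 i k ord0| < Cxh) ->
         (forall i k, `|uh0 i k ord0| < Cuh) ->
         forall j : 'I_N,
           vec_to0 (fun t =>
             cl_x (cl_traj A B C adj gam al alu L Lu G K (CLState x0 xh0 uh0) t) j
           - cl_xh (cl_traj A B C adj gam al alu L Lu G K (CLState x0 xh0 uh0) t) j).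

Lemma observation_achievable_unobservable_to0 (R : realType) (n m p N : nat)
    (A : 'M[R]_n) (B : 'M[R]_(n, m)) (C : 'M[R]_(p, n)) (adj : 'M[R]_N)
    (w : 'cV[R]_n) :
  (0 < N)%N -> observation_achievable A B C adj ->
  (forall t, C *m iter t (mulmx A) w = 0) ->
  vec_to0 (fun t => iter t (mulmx A) w).
Proof.
move=> N0 achievable unobs; have [c c0 wc] := cV_norm_bounded w.
have [gam [al [alu [L [Lu [G [K [_ observes]]]]]]]] :=
  achievable c 1 1 c0 ltr01 ltr01.
set traj := cl_traj A B C adj gam al alu L Lu G K.
pose z : 'I_N -> 'cV[R]_n := fun _ => 0; pose zu : 'I_N -> 'cV[R]_m := fun _ => 0.
have zero_small l (c' : R) (i : 'I_N) (r : 'I_l) :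
    0 < c' -> `|(0 : 'cV[R]_l) r ord0| < c' by rewrite mxE normr0.
have w_small i r : `|(z i + w) r ord0| < c by rewrite /z !mxE add0r wc.
pose j := Ordinal N0.
have err0 := observes z z zu (fun i r => zero_small _ _ i r c0)
  (fun i r => zero_small _ _ i r ltr01) (fun i r => zero_small _ _ i r ltr01) j.
have errw := observes (fun i => z i + w) z zu w_small
  (fun i r => zero_small _ _ i r ltr01) (fun i r => zero_small _ _ i r ltr01) j.
have shiftE : CLState (fun i => z i + w) z zu = shift_x w (CLState z z zu) by [].
rewrite shiftE in errw.
have -> : (fun t => iter t (mulmx A) w) = (fun t =>
    (cl_x (traj (shift_x w (CLState z z zu)) t) j
     - cl_xh (traj (shift_x w (CLState z z zu)) t) j)
    - (cl_x (traj (CLState z z zu) t) j - cl_xh (traj (CLState z z zu) t) j)).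
  apply: functional_extensionality => t; rewrite /traj cl_traj_shift_x //=.
  set a := cl_x _ j; set b := cl_xh _ j.
  by rewrite [a + _]addrC -[_ + a - b]addrA addrK.
exact: vec_to0B.
Qed.

Theorem theorem6 (R : realType) (n m p N : nat)
  (A : 'M[R]_n) (B : 'M[R]_(n, m)) (C : 'M[R]_(p, n)) (adj : 'M[R]_N) :
  (0 < N)%N ->
  (forall i, adj i i = 0) ->
  (forall i j, 0 <= adj i j) ->
  (forall Cx Cxh Cuh : R, 0 < Cx -> 0 < Cxh -> 0 < Cuh ->
     exists (gam al alu : R) (L Lu : nat) (G : 'M[R]_(n, p)) (K : 'M[R]_(m, n)),
       [/\ 0 < gam < 1, 0 < al <= 1, 0 < alu <= 1, (0 < L)%N & (0 < Lu)%N] /\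
       forall (x0 xh0 : 'I_N -> 'cV[R]_n) (uh0 : 'I_N -> 'cV[R]_m),
         (forall i k, `|x0 i k ord0| < Cx) ->
         (forall i k, `|xh0 i k ord0| < Cxh) ->
         (forall i k, `|uh0 i k ord0| < Cuh) ->
         forall j : 'I_N,
           vec_to0 (fun t =>
             cl_x (cl_traj A B C adj gam al alu L Lu G K (CLState x0 xh0 uh0) t) j
           - cl_xh (cl_traj A B C adj gam al alu L Lu G K (CLState x0 xh0 uh0) t) j)) ->
  detectable A C.
Proof.
move=> N0 _ _ achievable lam lam1; apply/eqP; apply: contraT => rank_defect.
have [v v0 [Av Cv]] := rank_deficient_unobservable_eigvec rank_defect.
have orbit_to0 (f : R[i] -> R) : f 0 = 0 -> {morph f : a b / a + b} ->
    (forall (x : R) z, f (x%:C%C * z) = x * f z) ->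
    vec_to0 (fun t => map_mx f (lam ^+ t *: v)).
  move=> f0 fD fM.
  have orbitE t : iter t (mulmx A) (map_mx f v) = map_mx f (lam ^+ t *: v).
    by rewrite iter_map_mx_real // (iter_mulmx_eigen _ Av).
  rewrite -(functional_extensionality _ _ orbitE).
  apply: observation_achievable_unobservable_to0 N0 achievable _ => t.
  rewrite orbitE -map_mx_real_mulmx // -scalemxAr Cv scaler0.
  by apply/matrixP => r c; rewrite !mxE.
exfalso; apply: (eigen_orbit_ReIm_not_to0 lam1 v0).
- exact: orbit_to0 (erefl _) (@ReD R) (@Re_realM R).
- exact: orbit_to0 (erefl _) (@ImD R) (@Im_realM R).
Qed.
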